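(* Let $G$ be a second-countable compact group, let $A$ be a finite-dimensional C*-algebra and let $\alpha\colon G\to\mathrm{Aut}(A)$ be a continuous action. If $\alpha_g$ is outer (i.e. not inner) for every $g\in G\setminus\{1\}$, then $G$ is finite. *)

From HB Require Import structures.
From mathcomp Require Import all_boot all_order all_algebra falgebra.
From mathcomp Require Import complex.
From mathcomp Require Import boolp classical_sets cardinality reals topology.
Import Order.TTheory GRing.Theory Num.Theory.

Set Implicit Arguments.
Unset Strict Implicit.
Unset Printing Implicit Defensive.

Local Open Scope classical_set_scope.
Local Open Scope ring_scope.

Definition is_group (G : Type) (mul : G -> G -> G) (inv : G -> G) (one : G) :=
  [/\ forall x y z, mul x (mul y z) = mul (mul x y) z,
      forall x, mul one x = x,
      forall x, mul x one = x,
      forall x, mul (inv x) x = one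
    & forall x, mul x (inv x) = one].

Definition is_topological_group (G : topologicalType)
    (mul : G -> G -> G) (inv : G -> G) (one : G) :=
  [/\ is_group mul inv one,
      continuous (fun p : G * G => mul p.1 p.2)
    & continuous inv].

Definition is_compact_group (G : topologicalType)
    (mul : G -> G -> G) (inv : G -> G) (one : G) :=
  [/\ is_topological_group mul inv one,
      hausdorff_space G
    & compact [set: G]].

(* Completeness is automatic in finite dimension.                     *)

Definition is_Cstar_algebra (R : realType) (A : falgType R[i])
    (star : A -> A) (nrm : A -> R) :=
  [/\
      [/\ forall a b, star (a + b) = star a + star b,
          forall (c : R[i]) a, star (c *: a) = conjc c *: star a,
          forall a b, star (a * b) = star b * star a
        & forall a, star (star a) = a],
      [/\ forall a, nrm a = 0 -> a = 0,
          forall a b, nrm (a + b) <= nrm a + nrm b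
        & forall (c : R[i]) a, nrm (c *: a) = Normc.normc c * nrm a],
      forall a b, nrm (a * b) <= nrm a * nrm b
    &
      forall a, nrm (star a * a) = nrm a ^+ 2].

Definition is_star_automorphism (R : realType) (A : falgType R[i])
    (star : A -> A) (f : A -> A) :=
  [/\ forall (c : R[i]) a b, f (c *: a + b) = c *: f a + f b,
      forall a b, f (a * b) = f a * f b,
      forall a, f (star a) = star (f a)
    & bijective f].

Definition is_inner (R : realType) (A : falgType R[i])
    (star : A -> A) (f : A -> A) :=
  exists u : A, [/\ star u * u = 1, u * star u = 1
                  & forall a, f a = u * a * star u].

(* A continuous action of the group (G, mul, inv, one) on A by
   *-automorphisms: a group homomorphism g |-> alpha g into Aut(A) which is
   continuous for the point-norm topology. *)
Definition is_continuous_action (R : realType) (G : topologicalType)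
    (mul : G -> G -> G) (one : G) (A : falgType R[i])
    (star : A -> A) (nrm : A -> R) (alpha : G -> A -> A) :=
  [/\ forall g, is_star_automorphism star (alpha g),
      forall a, alpha one a = a,
      forall g h a, alpha (mul g h) a = alpha g (alpha h a)
    & forall (a : A) (g0 : G) (e : R), 0 < e ->
        \forall g \near g0, nrm (alpha g a - alpha g0 a) < e].

From HB Require Import structures.
From mathcomp Require Import all_boot all_order all_algebra falgebra.
From mathcomp Require Import complex.
From mathcomp Require Import boolp classical_sets cardinality reals topology.
From mathcomp Require Import lra.
Import Order.TTheory GRing.Theory Num.Theory passmx.

(* A finite-dimensional C*-algebra A is separable: if y_k is the basis dual
   to a basis b_k for the trace form of the left regular representation
   (nondegenerate, by the spectral theorem for a a^* ), then
   sum_k a b_k ⊗ y_k = sum_k b_k ⊗ y_k a and sum_k b_k y_k = 1.  Hence for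
   a *-automorphism f moving each b_k by less than a fixed d > 0, the element
   v = sum_k f(b_k) y_k satisfies f(a) v = v a and |v - 1| <= 1/4; then v^* v
   is central and close to 1, and u = v (v^* v)^(-1/2) is a unitary with
   f = Ad u.  By continuity of the action, every g near 1 acts by an inner
   automorphism, so outerness makes 1 isolated: G is discrete, and being
   compact it is finite. *)

Set Implicit Arguments.
Unset Strict Implicit.
Unset Printing Implicit Defensive.

Local Open Scope classical_set_scope.
Local Open Scope ring_scope.
Local Open Scope complex_scope.

Lemma mxtrace_pid (F : fieldType) n r :
  (r <= n)%N -> \tr (pid_mx r : 'M[F]_n) = r%:R.
Proof.
move=> le_rn; rewrite /mxtrace (_ : \sum_i _ = \sum_(i < n | (i < r)%N) 1).
  by rewrite (big_ord_narrow le_rn) sumr_const card_ord.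
rewrite [RHS]big_mkcond; apply: eq_bigr => i _.
by rewrite mxE eqxx; case: (i < r)%N.
Qed.

Lemma mxtrace_idem (F : fieldType) n (P : 'M[F]_n) :
  P *m P = P -> \tr P = (\rank P)%:R.
Proof.
move=> PP; set L := col_ebase P; set U := row_ebase P.
set D : 'M[F]_n := pid_mx (\rank P).
have LDU : L *m D *m U = P by rewrite mulmx_ebase.
have L_unit : L \in unitmx by apply: col_ebase_unit.
have U_unit : U \in unitmx by apply: row_ebase_unit.
have DULD : D *m U *m L *m D = D.
  have := congr1 (fun X => invmx L *m X *m invmx U) PP.
  by rewrite -LDU /= !mulmxA mulVmx // mul1mx !mulmxK.
have DD : D *m D = D by rewrite pid_mx_id ?rank_leq_col.
rewrite -[in LHS]LDU -mulmxA mxtrace_mulC -{1}DD -!mulmxA mxtrace_mulC !mulmxA.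
by rewrite DULD mxtrace_pid ?rank_leq_col.
Qed.

Section PolynomialCalculus.
Variables (F : fieldType) (A : falgType F).
Implicit Types (h z : A) (s : seq F) (p q : {poly F}).

Definition prod_XsubC s : {poly F} := \prod_(z <- s) ('X - z%:P).

Lemma prod_XsubC_rem s mu :
  mu \in s -> prod_XsubC s = ('X - mu%:P) * prod_XsubC (rem mu s).
Proof. by move=> mus; rewrite /prod_XsubC (big_rem mu). Qed.

Lemma horner_prod_XsubC_rem s mu :
  uniq s -> mu \in s -> (prod_XsubC (rem mu s)).[mu] != 0.
Proof.
move=> us mus; rewrite horner_prod prodf_seq_neq0; apply/allP => nu nus /=.
rewrite hornerXsubC subr_eq0; apply: contraTneq nus => ->.
by rewrite mem_rem_uniqF.
Qed.

Definition lagrange_basis s mu : {poly F} :=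
  (prod_XsubC (rem mu s)).[mu]^-1 *: prod_XsubC (rem mu s).

Lemma horner_lagrange_basis s mu nu : uniq s -> mu \in s -> nu \in s ->
  (lagrange_basis s mu).[nu] = (nu == mu)%:R.
Proof.
move=> us mus nus; rewrite hornerZ; have [->|nu_mu] := eqVneq nu mu.
  by rewrite mulVf ?horner_prod_XsubC_rem.
have nu_rem : nu \in rem mu s by rewrite (mem_rem_uniq _ us) inE nu_mu.
by rewrite (prod_XsubC_rem nu_rem) !hornerM !hornerXsubC subrr mul0r mulr0.
Qed.

Definition interpolation s (c : F -> F) : {poly F} :=
  \sum_(mu <- s) c mu *: lagrange_basis s mu.

Lemma horner_interpolation s c nu :
  uniq s -> nu \in s -> (interpolation s c).[nu] = c nu.
Proof.
move=> us nus; rewrite horner_sum (bigD1_seq nu) //=.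
rewrite big1_seq => [|mu /andP[mu_nu mus]].
  by rewrite hornerZ horner_lagrange_basis // eqxx mulr1 addr0.
by rewrite hornerZ horner_lagrange_basis // eq_sym (negbTE mu_nu) mulr0.
Qed.

Lemma horner_alg_eq_on h s p q : uniq s -> horner_alg h (prod_XsubC s) = 0 ->
  {in s, forall mu, p.[mu] = q.[mu]} -> horner_alg h p = horner_alg h q.
Proof.
move=> us hs0 pq; apply/eqP; rewrite -subr_eq0 -rmorphB /=.
have [r ->] : exists r, p - q = r * prod_XsubC s.
  apply: uniq_roots_prod_XsubC; last by rewrite uniq_rootsE.
  by apply/allP => mu mus; rewrite rootE !hornerE pq // subrr.
by rewrite rmorphM /= hs0 mulr0.
Qed.

Lemma horner_alg_commX h p : h * horner_alg h p = horner_alg h p * h.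
Proof.
by have := congr1 (horner_alg h) (mulrC 'X p); rewrite !rmorphM /= horner_algX.
Qed.

Lemma horner_alg_central z : (forall a, z * a = a * z) ->
  forall p a, horner_alg z p * a = a * horner_alg z p.
Proof.
move=> zC; elim/poly_ind => [|p c IHp] a; first by rewrite rmorph0 mul0r mulr0.
rewrite rmorphD rmorphM /= horner_algX horner_algC mulrDl mulrDr.
by rewrite -mulrA zC (mulrA _ a) IHp -mulrA mulr_algl mulr_algr.
Qed.

(* [s] lists, with multiplicity, the roots of the minimal polynomial of [h]. *)
Definition minimal_roots h s := horner_alg h (prod_XsubC s) = 0 /\
  {in s, forall mu, horner_alg h (prod_XsubC (rem mu s)) != 0}.

Lemma minimal_roots_eigenvector h s mu : minimal_roots h s -> mu \in s ->
  h * horner_alg h (prod_XsubC (rem mu s)) =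
  mu *: horner_alg h (prod_XsubC (rem mu s)).
Proof.
move=> [hs0 _] mus; move: hs0; rewrite (prod_XsubC_rem mus) rmorphM /=.
by rewrite rmorphB /= horner_algX horner_algC mulrBl mulr_algl => /subr0_eq.
Qed.

Lemma exists_annihilating_poly h : exists2 p, p != 0 & horner_alg h p = 0.
Proof.
set n := \dim {:A}; set T := [tuple h ^+ i | i < n.+1].
have /freeP : ~~ free T.
  by rewrite /free size_tuple ltn_eqF // ltnS dimvS ?subvf.
move=> /existsNP[k /not_implyP[Tk0 /existsNP[i /eqP ki0]]].
exists (\poly_(j < n.+1) k (inord j)).
  apply: contra_neq ki0 => p0.
  have := coef_poly n.+1 (k \o inord) i.
  by rewrite ltn_ord /= inord_val p0 coef0 => <-.
rewrite poly_def rmorph_sum -[RHS]Tk0; apply: eq_bigr => j _ /=.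
by rewrite inord_val linearZ /= rmorphXn /= horner_algX nth_mktuple mulr_algl.
Qed.

End PolynomialCalculus.

Section MinimalRoots.
Variables (F : closedFieldType) (A : falgType F).

Lemma exists_annihilating_roots (h : A) :
  exists s, horner_alg h (prod_XsubC s) = 0.
Proof.
have [p p0 hp0] := exists_annihilating_poly h.
have [s ps] := closed_field_poly_normal p.
exists s; move: hp0; rewrite ps linearZ /= mulr_algl => /eqP.
by rewrite scaler_eq0 lead_coef_eq0 (negbTE p0) => /eqP.
Qed.

Lemma exists_minimal_roots (h : A) : exists s, minimal_roots h s.
Proof.
have [s] := exists_annihilating_roots h.
elim: {s}(size s) {-2}s (erefl (size s)).
  by move=> s /size0nil -> h0; exists [::].
move=> n IHn s size_s hs0.
have [/hasP[mu mus /eqP hrem0]|/hasPn smin] :=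
  boolP (has (fun mu => horner_alg h (prod_XsubC (rem mu s)) == 0) s).
  by apply: (IHn (rem mu s)); rewrite // size_rem // size_s.
by exists s.
Qed.

End MinimalRoots.

Section RegularTrace.
Variables (F : fieldType) (A : falgType F).
Local Notation basisA := (vbasis {:A}).
Local Notation dimA := (\dim {:A}).

Definition lmul_mx (x : A) : 'M[F]_dimA := mxof basisA basisA (amull x).

Lemma lmul_mxE x i j : lmul_mx x i j = coord basisA j (x * basisA`_i).
Proof. by rewrite /lmul_mx /mxof !mxE /= lfunE /= vecof_delta. Qed.

Lemma lmul_mxM x y : lmul_mx (x * y) = lmul_mx y *m lmul_mx x.
Proof. by rewrite /lmul_mx amullM -mxof_comp ?vbasisP. Qed.

Lemma lmul_mx_eq0 x : (lmul_mx x == 0) = (x == 0).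
Proof.
by rewrite /lmul_mx mxof_eq0 ?vbasisP // -(inj_eq (@amull_inj _ _)) linear0.
Qed.

Definition ltrace (x : A) : F := \tr (lmul_mx x).

Fact ltrace_is_scalar : scalar ltrace.
Proof. by move=> c x y; rewrite /ltrace /lmul_mx !linearP. Qed.

HB.instance Definition _ :=
  GRing.isLinear.Build F A F *%R ltrace ltrace_is_scalar.

Lemma ltraceC x y : ltrace (x * y) = ltrace (y * x).
Proof. by rewrite /ltrace !lmul_mxM mxtrace_mulC. Qed.

Lemma ltrace_coord x : ltrace x = \sum_i coord basisA i (x * basisA`_i).
Proof. by apply: eq_bigr => i _; rewrite lmul_mxE. Qed.

Lemma ltrace_idem e : e * e = e -> ltrace e = (\rank (lmul_mx e))%:R.
Proof. by move=> ee; rewrite /ltrace mxtrace_idem // -lmul_mxM ee. Qed.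

End RegularTrace.

Section DualBasis.
Variables (F : fieldType) (A : falgType F).
Local Notation basisA := (vbasis {:A}).
Local Notation dimA := (\dim {:A}).
Local Notation b_ i := (basisA`_i).
Implicit Types (x a : A) (i j k l : 'I_dimA).

Hypothesis ltrace_nondeg : forall a, (forall c, ltrace (a * c) = 0) -> a = 0.

Lemma ltrace_nondeg_basis a : (forall i, ltrace (a * b_ i) = 0) -> a = 0.
Proof.
move=> a_b0; apply: ltrace_nondeg => c.
rewrite (coord_vbasis (memvf c)) mulr_sumr linear_sum big1 // => i _.
by rewrite -scalerAr linearZ /= a_b0 mulr0.
Qed.

Definition gram : 'M[F]_dimA := \matrix_(i, j) ltrace (b_ i * b_ j).

Lemma gram_unit : gram \in unitmx.
Proof.
rewrite -row_free_unit -kermx_eq0; apply/rowV0P => v /sub_kermxP v_gram0.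
have a0 : \sum_i v 0 i *: b_ i = 0.
  apply: ltrace_nondeg_basis => j; have /rowP/(_ j) := v_gram0.
  rewrite !mxE => <-; rewrite mulr_suml linear_sum; apply: eq_bigr => i _.
  by rewrite -scalerAl linearZ mxE.
apply/rowP => i; rewrite mxE.
by rewrite -(coord_sum_free (v 0) i (basis_free (vbasisP _))) a0 linear0.
Qed.

Definition dual_basis j : A := \sum_l invmx gram l j *: b_ l.

Lemma ltrace_dual_basis i j : ltrace (b_ i * dual_basis j) = (i == j)%:R.
Proof.
have /matrixP/(_ i j) := mulmxV gram_unit; rewrite !mxE => <-.
rewrite mulr_sumr linear_sum; apply: eq_bigr => l _.
by rewrite -scalerAr linearZ /= mxE mulrC.
Qed.

Lemma coord_ltrace x j : coord basisA j x = ltrace (x * dual_basis j).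
Proof.
rewrite {2}(coord_vbasis (memvf x)) mulr_suml linear_sum (bigD1 j) //=.
rewrite big1 => [|i /negbTE ij]; last first.
  by rewrite -scalerAl linearZ /= ltrace_dual_basis ij mulr0.
by rewrite -scalerAl linearZ /= ltrace_dual_basis eqxx mulr1 addr0.
Qed.

Lemma dual_basis_expansion x :
  x = \sum_(j < dimA) ltrace (b_ j * x) *: dual_basis j.
Proof.
apply/eqP; rewrite -subr_eq0; apply/eqP/ltrace_nondeg => c.
rewrite ltraceC (coord_vbasis (memvf c)) mulr_suml linear_sum big1 // => i _.
rewrite -scalerAl linearZ mulrBr linearB /= mulr_sumr linear_sum (bigD1 i) //=.
rewrite big1 => [|j /negbTE ji]; last first.
  by rewrite -scalerAr linearZ /= ltrace_dual_basis eq_sym ji mulr0.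
by rewrite -scalerAr linearZ /= ltrace_dual_basis eqxx mulr1 addr0 subrr mulr0.
Qed.

Lemma sum_basis_dual : \sum_(k < dimA) b_ k * dual_basis k = 1.
Proof.
apply/eqP; rewrite -subr_eq0; apply/eqP/ltrace_nondeg => c.
rewrite ltraceC mulrBr mulr1 linearB /=; apply/eqP.
rewrite subr_eq0 [X in _ == X]ltrace_coord mulr_sumr linear_sum.
by apply/eqP/eq_bigr => k _; rewrite coord_ltrace mulrA.
Qed.

(* [\sum_k b_ k ⊗ dual_basis k] is a separability idempotent of [A]. *)
Lemma sum_basis_dual_intertwine (f : {linear A -> A}) a :
  \sum_(k < dimA) f (a * b_ k) * dual_basis k =
  \sum_(k < dimA) f (b_ k) * dual_basis k * a.
Proof.
transitivity (\sum_(k < dimA) \sum_(j < dimA)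
    ltrace (a * b_ k * dual_basis j) *: (f (b_ j) * dual_basis k)).
  apply: eq_bigr => k _; rewrite {1}(coord_vbasis (memvf (a * b_ k))).
  rewrite linear_sum mulr_suml; apply: eq_bigr => j _.
  by rewrite linearZ coord_ltrace scalerAl.
rewrite exchange_big /=; apply: eq_bigr => j _.
rewrite -mulrA [in RHS](dual_basis_expansion (dual_basis j * a)) mulr_sumr.
apply: eq_bigr => k _; rewrite -scalerAr; congr (_ *: _).
by rewrite -mulrA ltraceC mulrA.
Qed.

End DualBasis.

Lemma nrm_sum (T : Type) (R : numDomainType) (V : zmodType) (nrm : V -> R)
    (r : seq T) (F : T -> V) :
  nrm 0 = 0 -> (forall a b, nrm (a + b) <= nrm a + nrm b) ->
  nrm (\sum_(i <- r) F i) <= \sum_(i <- r) nrm (F i).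
Proof.
move=> nrm0 nrmD; elim/big_ind2: _ => // [|s a t b le_as le_bt].
  by rewrite nrm0.
exact: le_trans (nrmD a b) (lerD le_as le_bt).
Qed.

Lemma mul_eq1C (F : fieldType) (A : falgType F) (x y : A) :
  y * x = 1 -> x * y = 1.
Proof.
move=> yx1; have amull_x_inj : lker (amull x) == 0%VS.
  apply/lker0P => u v; rewrite !lfunE /= => xuv.
  by rewrite -[u]mul1r -yx1 -mulrA xuv mulrA yx1 mul1r.
set w := ((amull x)^-1)%VF 1.
have x_w : x * w = 1 by rewrite -[RHS](lker0_lfunVK amull_x_inj) lfunE.
suff -> : y = w by [].
by rewrite -[y]mulr1 -x_w mulrA yx1 mul1r.
Qed.

Lemma normc_sub1_lt1_Re_gt0 (R : rcfType) (z : R[i]) :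
  Normc.normc (z - 1) < 1 -> 0 < complex.Re z.
Proof.
move=> lt1; have := normc_ge_Re (z - 1).
rewrite [X in _ <= X]/(`|_|) /= lecR => /le_lt_trans/(_ lt1).
by case: z {lt1} => a b /=; rewrite ltr_norml => /andP[+ _]; lra.
Qed.

Section CstarAlgebra.
Variables (R : realType) (A : falgType R[i]) (star : A -> A) (nrm : A -> R).
Hypothesis cstarA : is_Cstar_algebra star nrm.
Implicit Types (a b h x z : A) (c mu : R[i]).
Local Notation b_ k := ((vbasis {:A})`_k).

Lemma starD a b : star (a + b) = star a + star b.
Proof. by case: cstarA => [[]]. Qed.

Lemma starZ c a : star (c *: a) = conjc c *: star a.
Proof. by case: cstarA => [[]]. Qed.

Lemma starM a b : star (a * b) = star b * star a.
Proof. by case: cstarA => [[]]. Qed.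

Lemma starK : involutive star.
Proof. by case: cstarA => [[]]. Qed.

Lemma nrm_eq0 a : nrm a = 0 -> a = 0.
Proof. by case: cstarA => _ [+ _ _] _ _; apply. Qed.

Lemma nrmD a b : nrm (a + b) <= nrm a + nrm b.
Proof. by case: cstarA => _ [_ + _] _ _; apply. Qed.

Lemma nrmZ c a : nrm (c *: a) = Normc.normc c * nrm a.
Proof. by case: cstarA => _ [_ _ +] _ _; apply. Qed.

Lemma nrmM a b : nrm (a * b) <= nrm a * nrm b.
Proof. by case: cstarA. Qed.

Lemma nrm_cstar a : nrm (star a * a) = nrm a ^+ 2.
Proof. by case: cstarA. Qed.

Lemma star0 : star 0 = 0.
Proof. by rewrite -(scale0r 0) starZ rmorph0 !scale0r. Qed.

Lemma starB a b : star (a - b) = star a - star b.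
Proof. by rewrite starD -scaleN1r starZ rmorphN1 scaleN1r. Qed.

Lemma star1 : star 1 = 1.
Proof. by rewrite -[star 1]mulr1 -{2}(starK 1) -starM mulr1 starK. Qed.

Lemma star_alg c : star c%:A = (conjc c)%:A.
Proof. by rewrite starZ star1. Qed.

Lemma nrm0 : nrm 0 = 0.
Proof. by rewrite -(scale0r 0) nrmZ Normc.normc0 mul0r. Qed.

Lemma nrmN a : nrm (- a) = nrm a.
Proof.
have normcN1 : Normc.normc (-1 : R[i]) = 1.
  by apply: complexI; exact: (@normrN1 R[i]).
by rewrite -scaleN1r nrmZ normcN1 mul1r.
Qed.

Lemma nrm_ge0 a : 0 <= nrm a.
Proof. by have := nrmD a (- a); rewrite subrr nrm0 nrmN; lra. Qed.

Lemma nrm_star a : nrm (star a) = nrm a.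
Proof.
suff nrm_star_le b : nrm b <= nrm (star b).
  by apply/eqP; rewrite eq_le -{2}(starK a) !nrm_star_le.
have [->|b0] := eqVneq (nrm b) 0; first exact: nrm_ge0.
have := nrmM (star b) b; rewrite nrm_cstar expr2 ler_pM2r //.
by rewrite lt_def b0 nrm_ge0.
Qed.

Lemma star_mul_eq0 x : star x * x = 0 -> x = 0.
Proof.
move=> xx0; apply: nrm_eq0; apply/eqP.
by have := nrm_cstar x; rewrite xx0 nrm0 => /esym/eqP; rewrite expf_eq0.
Qed.

Lemma horner_alg_star h : star h = h ->
  forall p, star (horner_alg h p) = horner_alg h (map_poly conjc p).
Proof.
move=> h_sa; elim/poly_ind => [|p c IHp].
  by rewrite map_poly0 !rmorph0 star0.
rewrite !rmorphD !rmorphM /= map_polyX map_polyC /= !horner_algX !horner_algC.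
by rewrite starD starM h_sa IHp star_alg -horner_alg_commX.
Qed.

Lemma selfadjoint_eigenvalue_real h x mu :
  star h = h -> x != 0 -> h * x = mu *: x -> conjc mu = mu.
Proof.
move=> h_sa x0 hx; apply/eqP; rewrite -subr_eq0.
have e1 : star x * h * x = conjc mu *: (star x * x).
  by rewrite -{1}h_sa -starM hx starZ scalerAl.
have e2 : star x * h * x = mu *: (star x * x) by rewrite -mulrA hx scalerAr.
have : (conjc mu - mu) *: (star x * x) = 0 by rewrite scalerBl -e1 -e2 subrr.
move/eqP; rewrite scaler_eq0 => /orP[// | /eqP /star_mul_eq0 x_eq0].
by rewrite x_eq0 eqxx in x0.
Qed.

Section SelfAdjoint.
Variables (h : A) (s : seq R[i]).
Hypotheses (h_sa : star h = h) (hs : minimal_roots h s).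

Lemma minimal_roots_real mu : mu \in s -> conjc mu = mu.
Proof.
move=> mus; have [_ smin] := hs.
exact: selfadjoint_eigenvalue_real h_sa (smin mu mus)
  (minimal_roots_eigenvector hs mus).
Qed.

Lemma minimal_roots_uniq : uniq s.
Proof.
have [hs0 smin] := hs.
have simple mu : mu \in s -> mu \notin rem mu s.
  move=> mus; apply/negP => mu_rem.
  set x := horner_alg h (prod_XsubC (rem mu s)).
  set w := horner_alg h (prod_XsubC (rem mu (rem mu s))).
  have x_def : x = (h - mu%:A) * w.
    rewrite /x (prod_XsubC_rem mu_rem) rmorphM rmorphB /=.
    by rewrite horner_algX horner_algC.
  have hx : (h - mu%:A) * x = 0.
    by rewrite mulrBl mulr_algl (minimal_roots_eigenvector hs mus) subrr.
  have : star x * x = 0.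
    rewrite {1}x_def starM starB star_alg h_sa (minimal_roots_real mus).
    by rewrite -mulrA hx mulr0.
  by move/star_mul_eq0/eqP; apply/negP; apply: smin.
apply: count_mem_uniq => mu; have [mus|/count_memPn -> //] := boolP (mu \in s).
move/count_memPn: (simple mu mus); rewrite count_mem_rem eqxx => /eqP.
rewrite subn_eq0 => le1; apply/eqP.
by rewrite eqn_leq le1 -has_count has_pred1.
Qed.

End SelfAdjoint.

(* If [e] is the spectral idempotent of [a * star a] at an eigenvalue
   [mu != 0], then [ltrace (a * (star a * e))] is [mu] times the rank of [e]. *)
Lemma ltrace_nondeg a : (forall b, ltrace (a * b) = 0) -> a = 0.
Proof.
move=> tr_a0; apply/eqP; apply: contraT => a0.
pose h := a * star a.
have h_sa : star h = h by rewrite starM starK.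
have h0 : h != 0.
  apply: contra a0 => /eqP aa0; rewrite -[a]starK.
  by rewrite (star_mul_eq0 (x := star a)) ?star0 ?starK.
have [s hs] := exists_minimal_roots h; have [hs0 smin] := hs.
have us := minimal_roots_uniq h_sa hs.
have /hasP[mu mus mu0] : has (fun mu => mu != 0) s.
  apply: contraNT h0 => /hasPn s0.
  rewrite -[h]horner_algX (horner_alg_eq_on (q := 0) us hs0) ?rmorph0 //.
  by move=> nu /s0; rewrite hornerX horner0 => /negPn/eqP.
pose e := horner_alg h (lagrange_basis s mu).
have e_idem : e * e = e.
  rewrite -rmorphM; apply: (horner_alg_eq_on us hs0) => nu nus.
  rewrite hornerM horner_lagrange_basis //.
  by case: (nu == mu); rewrite ?mulr1 ?mulr0.
have he : h * e = mu *: e.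
  rewrite -mulr_algl -(horner_algC h) -[X in X * _]horner_algX -!rmorphM.
  apply: (horner_alg_eq_on us hs0) => nu nus.
  rewrite !hornerM hornerX hornerC horner_lagrange_basis //.
  by case: eqVneq => [->|]; rewrite ?mulr0.
have e0 : e != 0.
  rewrite /e /lagrange_basis linearZ /= mulr_algl scaler_eq0 negb_or smin //.
  by rewrite invr_eq0 horner_prod_XsubC_rem.
have := tr_a0 (star a * e); rewrite mulrA -/h he linearZ /= ltrace_idem //.
move/eqP; rewrite mulf_eq0 (negbTE mu0) pnatr_eq0 mxrank_eq0 lmul_mx_eq0.
by rewrite (negbTE e0).
Qed.

Lemma eigenvalue_normc_le h x mu :
  x != 0 -> h * x = mu *: x -> Normc.normc mu <= nrm h.
Proof.
move=> x0 hx; have nx : 0 < nrm x.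
  by rewrite lt_def nrm_ge0 andbT; apply: contra x0 => /eqP/nrm_eq0 ->.
by rewrite -(ler_pM2r nx) -nrmZ -hx nrmM.
Qed.

(* [y = z ^ (-1/2)], a polynomial in [z] interpolating [mu ^ (-1/2)] on the
   spectrum of [z], which is real and positive. *)
Lemma central_inv_sqrt z : star z = z -> (forall a, z * a = a * z) ->
  nrm (z - 1) < 1 ->
  exists y, [/\ star y = y, forall a, y * a = a * y & y * y * z = 1].
Proof.
move=> z_sa zC z_near1.
have [t zt] := exists_minimal_roots z; have [zt0 tmin] := zt.
have ut := minimal_roots_uniq z_sa zt.
have t_real mu : mu \in t -> (complex.Re mu)%:C = mu.
  move=> mut; apply: RRe_real; rewrite CrealE; apply/eqP.
  exact: minimal_roots_real z_sa zt mu mut.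
have t_pos mu : mu \in t -> 0 < complex.Re mu.
  move=> mut; apply: normc_sub1_lt1_Re_gt0; apply: le_lt_trans z_near1.
  apply: (eigenvalue_normc_le (tmin mu mut)).
  by rewrite mulrBl (minimal_roots_eigenvector zt mut) mul1r scalerBl scale1r.
pose P := interpolation t (fun mu => ((Num.sqrt (complex.Re mu))^-1)%:C).
exists (horner_alg z P); split.
- rewrite horner_alg_star //; apply: (horner_alg_eq_on ut zt0) => mu mut.
  rewrite -{1}(minimal_roots_real z_sa zt mut) horner_map /=.
  by rewrite horner_interpolation // conjc_real.
- exact: horner_alg_central.
- have -> : horner_alg z P * horner_alg z P * z = horner_alg z (P * P * 'X).
    by rewrite !rmorphM /= horner_algX.
  rewrite -(rmorph1 (horner_alg z)); apply: (horner_alg_eq_on ut zt0) => mu mut.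
  rewrite !hornerE horner_interpolation // -{3}(t_real mu mut) -!rmorphM /=.
  have Re_mu_gt0 := t_pos mu mut.
  by rewrite -invfM -expr2 sqr_sqrtr ?ltW // mulVf ?gt_eqF.
Qed.

Lemma nrm_star_mul_sub1 v : nrm (v - 1) <= 4^-1 -> nrm (star v * v - 1) < 1.
Proof.
have [w ->] : exists w, v = 1 + w by exists (v - 1); rewrite addrC subrK.
rewrite addrC addKr => w_small.
have -> : star (1 + w) * (1 + w) - 1 = star w + w + star w * w.
  rewrite starD star1 mulrDl !mul1r mulrDr mulr1.
  by rewrite [LHS]addrC !addrA addNr add0r [w + _]addrC.
have w_ge0 := nrm_ge0 w.
apply: le_lt_trans (nrmD _ _) _.
apply: le_lt_trans (lerD (nrmD _ _) (nrmM _ _)) _.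
rewrite nrm_star; nra.
Qed.

(* [u = v * (star v * v) ^ (-1/2)] is a unitary implementing [f]. *)
Lemma intertwiner_inner f v : is_star_automorphism star f ->
  (forall a, f a * v = v * a) -> nrm (v - 1) <= 4^-1 -> is_inner star f.
Proof.
case=> _ _ f_star _ fv v_near1.
pose z := star v * v.
have z_sa : star z = z by rewrite starM starK.
have star_v_f a : star v * f a = a * star v.
  by have := congr1 star (fv (star a)); rewrite !starM f_star !starK.
have zC a : z * a = a * z by rewrite /z -mulrA -fv !mulrA star_v_f.
have [y [y_sa yC yyz]] := central_inv_sqrt z_sa zC (nrm_star_mul_sub1 v_near1).
pose u := v * y.
have uu : star u * u = 1.
  by rewrite /u starM y_sa !mulrA -(mulrA y) -/z -mulrA zC mulrA yyz.
exists u; split => // [|a]; first exact: mul_eq1C.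
have fu : f a * u = u * a by rewrite /u mulrA fv -mulrA -yC mulrA.
by rewrite -[f a]mulr1 -(mul_eq1C uu) mulrA fu.
Qed.

(* [v = \sum_k f (b_ k) * y k] intertwines [f] with the identity, and it is
   [d * \sum_k nrm (y k)]-close to [\sum_k b_ k * y k = 1]. *)
Lemma star_automorphism_near_id_inner : exists2 d : R, 0 < d &
  forall f, is_star_automorphism star f ->
  (forall k : 'I_(\dim {:A}), nrm (f (b_ k) - b_ k) < d) -> is_inner star f.
Proof.
pose y := @dual_basis _ A; pose S := \sum_k nrm (y k).
have S_ge0 : 0 <= S by apply: sumr_ge0 => k _; exact: nrm_ge0.
exists (4 * (1 + S))^-1 => [|f f_aut f_near_id]; first by rewrite invr_gt0; lra.
have [f_linear f_mul _ _] := f_aut.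
pose fL : {linear A -> A} :=
  HB.pack f (GRing.isLinear.Build _ _ _ _ f f_linear).
apply: (@intertwiner_inner f (\sum_(k < \dim {:A}) f (b_ k) * y k) f_aut).
  move=> a; rewrite mulr_sumr mulr_suml.
  rewrite -(sum_basis_dual_intertwine ltrace_nondeg fL a).
  by apply: eq_bigr => k _; rewrite mulrA -f_mul.
rewrite -[X in _ - X](sum_basis_dual ltrace_nondeg) -sumrB.
apply: le_trans (nrm_sum _ _ nrm0 nrmD) _.
apply: (@le_trans _ _ ((4 * (1 + S))^-1 * S)).
  rewrite mulr_sumr; apply: ler_sum => k _; rewrite -mulrBl.
  apply: le_trans (nrmM _ _) _; apply: ler_wpM2r; first exact: nrm_ge0.
  exact/ltW/f_near_id.
rewrite invfM -mulrA ler_pdivrMl // mulrC ler_pdivrMr; lra.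
Qed.

End CstarAlgebra.

Lemma compact_discrete_finite (T : topologicalType) :
  compact [set: T] -> (forall x : T, nbhs x [set x]) -> finite_set [set: T].
Proof.
move=> cT isolated; apply: contrapT => /frechet_properfilter cofinite.
have [x [_ cluster_x]] := cT _ cofinite (cofinite_setT T).
have cofinite_x : frechet_filter (~` [set x]).
  by rewrite /frechet_filter /= setCK; exact: finite_set1.
by have [y []] := cluster_x _ _ cofinite_x (isolated x).
Qed.

Lemma isolated_one_discrete (G : topologicalType) (mul : G -> G -> G)
    (inv : G -> G) (one : G) :
  is_topological_group mul inv one -> nbhs one [set one] ->
  forall x : G, nbhs x [set x].
Proof.
move=> [[mulA mul1g mulg1 mulVg mulgV] mul_cont _] isolated_one x.
have pair_cont : {for x, continuous (fun y : G => (inv x, y))}.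
  by apply: cvg_pair; [exact: cvg_cst | exact: cvg_id].
have /= translate_cont := continuous_comp pair_cont (mul_cont (inv x, x)).
have : \forall y \near x, mul (inv x) y = one.
  by apply: (translate_cont [set one]); rewrite /= mulVg.
apply: filterS => y xy1.
by rewrite -[y]mul1g -(mulgV x) -mulA xy1 mulg1.
Qed.

Theorem proposition2p10 (R : realType) (G : topologicalType)
    (mul : G -> G -> G) (inv : G -> G) (one : G)
    (A : falgType R[i]) (star : A -> A) (nrm : A -> R)
    (alpha : G -> A -> A) :
  is_compact_group mul inv one ->
  @second_countable G ->
  is_Cstar_algebra star nrm ->
  is_continuous_action mul one star nrm alpha ->
  (forall g : G, g <> one -> ~ is_inner star (alpha g)) ->
  finite_set [set: G].
Proof.
move=> [G_group _ G_compact] _ cstarA [alpha_aut alpha1 _ alpha_cont] outer.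
apply: compact_discrete_finite G_compact _.
apply: isolated_one_discrete G_group _.
have [d d_gt0 near_id_inner] := star_automorphism_near_id_inner cstarA.
pose b k := (vbasis {:A})`_k.
have : \forall g \near one,
    forall k : 'I_(\dim {:A}), nrm (alpha g (b k) - b k) < d.
  apply: filter_forall => k.
  by have := alpha_cont (b k) one d d_gt0; rewrite alpha1.
apply: filterS => g alpha_g_near_id; apply: contrapT => g_ne1.
exact: outer g g_ne1 (near_id_inner _ (alpha_aut g) alpha_g_near_id).
Qed.
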